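(* Let $\Omega=\{\omega_1,\dots,\omega_N\}$ be a finite set with probabilities $p_i\in(0,1]$, $\sum_{i=1}^N p_i=1$. Let $C\in\mathbb{R}^{d\times n}$, $A\in\mathbb{R}^{k\times n}$, $b\in\mathbb{R}^k$, and for each $i$ let $Q_i\in\mathbb{R}^{d\times m}$, $T_i\in\mathbb{R}^{\ell\times n}$, $W_i\in\mathbb{R}^{\ell\times m}$, $u^i\in\mathbb{R}^\ell$. Let $\mathcal{P}^{RP}:=\{Cx+\sum_{i=1}^Np_iQ_iy^i \mid Ax=b,\ T_ix+W_iy^i=u^i\ (i=1,\dots,N),\ x\ge0,\ y^1,\dots,y^N\ge0\}+\mathbb{R}^d_+$ be the upper image of the recourse problem, and with $\bar Q:=\sum_ip_iQ_i$, $\bar T:=\sum_ip_iT_i$, $\bar W:=\sum_ip_iW_i$, $\bar u:=\sum_ip_iu^i$ let $\mathcal{P}^{EV}:=\{Cx+\bar Qy\mid Ax=b,\ \bar Tx+\bar Wy=\bar u,\ x\ge0,\ y\ge0\}+\mathbb{R}^d_+$ be the upper image of the expected value problem. If $Q_1=\dots=Q_N$ and $W_1=\dots=W_N$, then $\mathcal{P}^{EV}\supseteq\mathcal{P}^{RP}$.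
   Context: Here $x\in\mathbb{R}^n$, $y,y^i\in\mathbb{R}^m$, inequalities on vectors are componentwise, and $+\mathbb{R}^d_+$ denotes Minkowski addition of the nonnegative orthant. *)

From mathcomp Require Import all_boot all_order all_algebra.
From mathcomp Require Import reals.
Set Implicit Arguments. Unset Strict Implicit. Unset Printing Implicit Defensive.
Import Order.TTheory GRing.Theory Num.Theory.
Local Open Scope ring_scope.

Definition vnonneg (R : realType) (m : nat) (v : 'cV[R]_m) : Prop :=
  forall i, 0 <= v i 0.

Definition vle (R : realType) (m : nat) (u v : 'cV[R]_m) : Prop :=
  forall i, u i 0 <= v i 0.

Definition upper_image_RP (R : realType) (N d n m k l : nat)
  (p : 'I_N -> R) (C : 'M[R]_(d, n)) (A : 'M[R]_(k, n)) (b : 'cV[R]_k)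
  (Q : 'I_N -> 'M[R]_(d, m)) (T : 'I_N -> 'M[R]_(l, n))
  (W : 'I_N -> 'M[R]_(l, m)) (u : 'I_N -> 'cV[R]_l) (z : 'cV[R]_d) : Prop :=
  exists (x : 'cV[R]_n) (y : 'I_N -> 'cV[R]_m),
    [/\ A *m x = b,
        (forall i, T i *m x + W i *m y i = u i),
        vnonneg x,
        (forall i, vnonneg (y i)) &
        vle (C *m x + \sum_(i < N) p i *: (Q i *m y i)) z].

Definition upper_image_EV (R : realType) (N d n m k l : nat)
  (p : 'I_N -> R) (C : 'M[R]_(d, n)) (A : 'M[R]_(k, n)) (b : 'cV[R]_k)
  (Q : 'I_N -> 'M[R]_(d, m)) (T : 'I_N -> 'M[R]_(l, n))
  (W : 'I_N -> 'M[R]_(l, m)) (u : 'I_N -> 'cV[R]_l) (z : 'cV[R]_d) : Prop :=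
  let Qbar := \sum_(i < N) p i *: Q i in
  let Tbar := \sum_(i < N) p i *: T i in
  let Wbar := \sum_(i < N) p i *: W i in
  let ubar := \sum_(i < N) p i *: u i in
  exists (x : 'cV[R]_n) (y : 'cV[R]_m),
    [/\ A *m x = b,
        Tbar *m x + Wbar *m y = ubar,
        vnonneg x,
        vnonneg y &
        vle (C *m x + Qbar *m y) z].

From mathcomp Require Import all_boot all_order all_algebra.
From mathcomp Require Import reals.
Set Implicit Arguments. Unset Strict Implicit. Unset Printing Implicit Defensive.
Import Order.TTheory GRing.Theory Num.Theory.
Local Open Scope ring_scope.

(* The expected value problem is fed the averaged recourse [ybar := \sum_i p_i y^i].
   Since all W_i equal the average Wbar, Tbar x + Wbar ybar = \sum_i p_i (T_i x + W_i y^i)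
   = ubar, and likewise Qbar ybar = \sum_i p_i Q_i y^i, so the objective is unchanged. *)

Lemma scaler_suml_const (R : pzRingType) (V : lmodType R) (I : finType)
    (p : I -> R) (F : I -> V) (i : I) :
  \sum_j p j = 1 -> (forall j, F j = F i) -> \sum_j p j *: F j = F i.
Proof.
move=> sum_p1 F_const.
rewrite (eq_bigr (fun j => p j *: F i)); last by move=> j _; rewrite F_const.
by rewrite -scaler_suml sum_p1 scale1r.
Qed.

Lemma vnonneg_sum_scale (R : realType) (I : finType) (m : nat)
    (p : I -> R) (y : I -> 'cV[R]_m) :
  (forall i, 0 <= p i) -> (forall i, vnonneg (y i)) -> vnonneg (\sum_i p i *: y i).
Proof.
move=> p_ge0 y_ge0; rewrite /vnonneg => r; rewrite summxE; apply: sumr_ge0 => i _.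
by rewrite mxE mulr_ge0 // y_ge0.
Qed.

Lemma mulmx_const_avg (R : comPzRingType) (I : finType) (a b c : nat)
    (p : I -> R) (M : I -> 'M[R]_(a, b)) (y : I -> 'M[R]_(b, c)) :
  \sum_j p j = 1 -> (forall i j, M i = M j) ->
  (\sum_j p j *: M j) *m (\sum_i p i *: y i) = \sum_i p i *: (M i *m y i).
Proof.
move=> sum_p1 M_const; rewrite mulmx_sumr; apply: eq_bigr => i _.
by rewrite (scaler_suml_const sum_p1 (M_const^~ i)) scalemxAr.
Qed.

Theorem proposition6p1 (R : realType) (N d n m k l : nat)
  (p : 'I_N -> R) (C : 'M[R]_(d, n)) (A : 'M[R]_(k, n)) (b : 'cV[R]_k)
  (Q : 'I_N -> 'M[R]_(d, m)) (T : 'I_N -> 'M[R]_(l, n))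
  (W : 'I_N -> 'M[R]_(l, m)) (u : 'I_N -> 'cV[R]_l) :
  (forall i, 0 < p i <= 1) ->
  \sum_(i < N) p i = 1 ->
  (forall i j, Q i = Q j) ->
  (forall i j, W i = W j) ->
  forall z : 'cV[R]_d,
    upper_image_RP p C A b Q T W u z -> upper_image_EV p C A b Q T W u z.
Proof.
move=> p_bnd sum_p1 Q_const W_const z [x [y [Ax_b rec_eq x_ge0 y_ge0 obj_le]]].
have p_ge0 i : 0 <= p i by case/andP: (p_bnd i) => /ltW.
exists x, (\sum_i p i *: y i); split => //.
- rewrite mulmx_const_avg // mulmx_suml -big_split /=.
  by apply: eq_bigr => i _; rewrite -scalemxAl -scalerDr rec_eq.
- exact: vnonneg_sum_scale.
- by rewrite mulmx_const_avg.
Qed.
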